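(* Let $k\ge 2$ and $n>t\geq 1$ be integers. Then the number $B_k(n,t)$ of length-$n$ words over $\Sigma_k$ that have a unique border, this border having length $t$, satisfies \[ B_k(n,t)=\begin{cases} 0, & \text{if } n<2t;\\ u_t k^{n-2t}-\sum_{i=2t}^{\lfloor n/2\rfloor}B_k(i,t)k^{n-2i}, & \text{if } n\ge 2t \text{ and } n+t \text{ is odd};\\ u_t k^{n-2t}-B_k\!\left(\tfrac{n+t}{2},t\right)-\sum_{i=2t}^{\lfloor n/2\rfloor}B_k(i,t)k^{n-2i}, & \text{if } n\ge 2t \text{ and } n+t \text{ is even}. \end{cases} \]
   Context: $\Sigma_k=\{0,1,\ldots,k-1\}$. A border of a word $w$ is a non-empty word that is both a proper prefix and a proper suffix of $w$; $w$ is unbordered if it has no border. A word has a unique border if it has exactly one border. $u_t$ denotes the number of unbordered words of length $t$ over $\Sigma_k$ (with $u_0=1$, $u_n=ku_{n-1}-u_{n/2}$ for even $n>0$, $u_n=ku_{n-1}$ for odd $n$). An empty sum is zero. *)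

From mathcomp Require Import all_boot all_order all_algebra.
Set Implicit Arguments. Unset Strict Implicit. Unset Printing Implicit Defensive.

(* Words over Sigma_k = {0,...,k-1} are sequences over 'I_k. *)

Definition is_border_len (T : eqType) (w : seq T) (l : nat) : bool :=
  (0 < l) && (l < size w) && (take l w == drop (size w - l) w).

Definition unbordered (T : eqType) (w : seq T) : bool :=
  [forall l : 'I_(size w), ~~ is_border_len w l].

Definition unique_border_len (T : eqType) (w : seq T) (t : nat) : bool :=
  is_border_len w t &&
  [forall l : 'I_(size w), is_border_len w l ==> (val l == t)].

Definition u (k t : nat) : nat :=
  #|[set w : t.-tuple 'I_k | unbordered (tval w)]|.

Definition B (k n t : nat) : nat :=
  #|[set w : n.-tuple 'I_k | unique_border_len (tval w) t]|.

From mathcomp Require Import all_boot all_order all_algebra zify.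

(* Count the words w of length n having t as a border with an unbordered
   prefix of length t: there are u_t k^(n-2t) of them.  Such a w either has t
   as its unique border, or has a least border l > t, and then take l w is
   exactly a word with unique border t.  If 2l <= n, w is such a prefix
   repeated as suffix with a free middle: B(l,t) k^(n-2l) words.  If 2l > n,
   the two occurrences overlap and create the border 2l - n of take l w, so
   l = (n+t)/2 and w is determined by its suffix of length l: B(l,t) words.
   Finally B(l,t) = 0 for l < 2t, for the same overlap reason. *)

Set Implicit Arguments.
Unset Strict Implicit.
Unset Printing Implicit Defensive.

Lemma sum_least_witness (P : pred nat) a b :
  \sum_(a <= l < b) (P l && ~~ has P (index_iota a l)) = has P (index_iota a b).
Proof.
elim: b => [|b IHb]; first by rewrite big_geq.
case: (leqP a b) => ab.
  rewrite big_nat_recr //= IHb /index_iota subSn // -addn1 iotaD subnKC //.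
  by rewrite has_cat /= orbF; case: (has P _); case: (P b).
by rewrite big_geq // /index_iota (_ : b.+1 - a = 0) //; lia.
Qed.

Lemma sum_nat_drop_zero_prefix (F : nat -> nat) a c b :
  a <= c -> (forall l, l < c -> F l = 0) ->
  \sum_(a <= l < b) F l = \sum_(c <= l < b) F l.
Proof.
move=> ac F0; case: (leqP c b) => cb.
  rewrite (big_cat_nat ac cb) /= big_nat_cond big1 // => l /andP[/andP[_ lc] _].
  exact: F0.
rewrite [RHS](big_geq (ltnW cb)) big_nat_cond big1 // => l /andP[/andP[_ lb] _].
exact/F0/(ltn_trans lb cb).
Qed.

Section Borders.
Variable T : eqType.
Implicit Types w : seq T.

Lemma is_border_lenE w l :
  is_border_len w l = [&& 0 < l, l < size w & take l w == drop (size w - l) w].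
Proof. by rewrite /is_border_len andbA. Qed.

Lemma is_border_len_bounds w l : is_border_len w l -> 0 < l < size w.
Proof. by rewrite is_border_lenE => /and3P[-> ->]. Qed.

Lemma is_border_len_take w l m :
  is_border_len w l -> m < l -> is_border_len (take l w) m = is_border_len w m.
Proof.
rewrite !is_border_lenE => /and3P[_ lw /eqP wl] ml.
have lw' := ltnW lw; have ml' := ltnW ml.
rewrite size_takel // ml (ltn_trans ml lw) take_takel // wl drop_drop.
by have -> : l - m + (size w - l) = size w - m by lia.
Qed.

(* With period p = size w - l, the prefix of length l - p is
   take (l - p) (drop p w) = drop p (take l w) = drop (2 p) w. *)
Lemma is_border_len_overlap w l :
  is_border_len w l -> size w < 2 * l -> is_border_len w (2 * l - size w).
Proof.
rewrite !is_border_lenE => /and3P[_ lw /eqP wl] w_lt.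
apply/and3P; split; [lia | lia | apply/eqP].
have -> : 2 * l - size w = l - (size w - l) by lia.
have -> : size w - (l - (size w - l)) = (size w - l) + (size w - l) by lia.
rewrite -(take_takel w (leq_subr (size w - l) l)) wl take_drop subnK; last by lia.
by rewrite wl drop_drop.
Qed.

Lemma unborderedP w : reflect (forall m, ~~ is_border_len w m) (unbordered w).
Proof.
apply: (iffP forallP) => [wu m | wu l]; last exact: wu.
case: (ltnP m (size w)) => [mw | wm]; first exact: (wu (Ordinal mw)).
by rewrite is_border_lenE (ltnNge m) wm andbF.
Qed.

Lemma unique_border_lenP w t :
  reflect (is_border_len w t /\ forall m, is_border_len w m -> m = t)
          (unique_border_len w t).
Proof.
apply: (iffP andP) => [[wt /forallP wu] | [wt wu]]; split => //.
  move=> m wm; have [_ mw] := andP (is_border_len_bounds wm).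
  by move: (wu (Ordinal mw)); rewrite /= wm => /eqP.
by apply/forallP => l; apply/implyP => /wu /eqP.
Qed.

Lemma unbordered_take_border_min w t m :
  is_border_len w t -> unbordered (take t w) -> is_border_len w m -> t <= m.
Proof.
move=> wt /unborderedP tu wm; rewrite leqNgt; apply/negP => mt.
by have := tu m; rewrite is_border_len_take ?wm.
Qed.

Lemma unique_border_len_unbordered_take w t :
  unique_border_len w t -> is_border_len w t && unbordered (take t w).
Proof.
case/unique_border_lenP => wt wu; rewrite wt; apply/unborderedP => m.
apply/negP => tm; have [_] := andP (is_border_len_bounds tm).
rewrite size_takel; last by have := is_border_len_bounds wt; lia.
by move=> mt; move: tm; rewrite is_border_len_take // => /wu; lia.
Qed.

Lemma unique_border_len_size w t : unique_border_len w t -> 2 * t <= size w.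
Proof.
case/unique_border_lenP => wt wu; rewrite leqNgt; apply/negP => w_lt.
have := wu _ (is_border_len_overlap wt w_lt); have := is_border_len_bounds wt; lia.
Qed.

Lemma unique_border_lenE w t :
  is_border_len w t -> unbordered (take t w) ->
  unique_border_len w t = ~~ has (is_border_len w) (index_iota t.+1 (size w)).
Proof.
move=> wt tu; apply/unique_border_lenP/hasPn => [[_ wu] m | wu].
  by rewrite mem_index_iota => /andP[tm _]; apply/negP => /wu; lia.
split=> // m wm; have := unbordered_take_border_min wt tu wm.
rewrite leq_eqVlt => /orP[/eqP // | tm]; have [_ mw] := andP (is_border_len_bounds wm).
by have := wu m; rewrite mem_index_iota tm mw wm => /(_ isT).
Qed.

Lemma unique_border_len_take w t l :
  is_border_len w t -> unbordered (take t w) -> is_border_len w l -> t < l ->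
  unique_border_len (take l w) t = ~~ has (is_border_len w) (index_iota t.+1 l).
Proof.
move=> wt tu wl tl; have [_ lw] := andP (is_border_len_bounds wl).
have lw' := ltnW lw; have tl' := ltnW tl.
rewrite unique_border_lenE ?is_border_len_take ?take_takel ?size_takel //.
congr negb; apply: eq_in_has => m; rewrite mem_index_iota => /andP[_ ml].
exact: is_border_len_take.
Qed.

Lemma border_unbordered_take_split w t :
  (is_border_len w t && unbordered (take t w) : nat) =
  unique_border_len w t
  + \sum_(t.+1 <= l < size w) (is_border_len w l && unique_border_len (take l w) t).
Proof.
case: (boolP (is_border_len w t && unbordered (take t w))) => [/andP[wt tu] | wtu].
  rewrite unique_border_lenE // (eq_big_nat _ _ (F2 := fun l =>
    (is_border_len w l && ~~ has (is_border_len w) (index_iota t.+1 l) : nat))).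
    by rewrite sum_least_witness; case: has.
  move=> l /andP[tl _]; case wl: (is_border_len w l) => //=.
  by rewrite unique_border_len_take.
have -> : unique_border_len w t = false.
  by apply: contraNF wtu => /unique_border_len_unbordered_take.
rewrite big1_seq // => l /andP[_]; rewrite mem_index_iota => /andP[tl _].
case: (boolP (is_border_len w l)) => //= wl.
case: (boolP (unique_border_len _ t)) => // /unique_border_len_unbordered_take.
by rewrite is_border_len_take // take_takel ?(ltnW tl) // (negbTE wtu).
Qed.

Lemma long_border_catE (x y : seq T) l t :
  t < l -> size x + t = l -> size y = l ->
  is_border_len (x ++ y) l && unique_border_len (take l (x ++ y)) t
  = (x == take (l - t) y) && unique_border_len y t.
Proof.
move=> tl xl yl.
have take_xy : take l (x ++ y) = x ++ take t y.
  by rewrite take_cat ifN; [congr cat; congr take | rewrite -leqNgt]; lia.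
have -> : l - t = size x by lia.
rewrite is_border_lenE size_cat yl addnK drop_size_cat // take_xy.
have [l_gt0 l_lt] : 0 < l /\ l < size x + l by lia.
rewrite l_gt0 l_lt.
case: (eqVneq (x ++ take t y) y) => [xy | xy] /=.
  have -> : take (size x) y = x by rewrite -xy take_size_cat.
  by rewrite xy eqxx.
apply/esym/negbTE/negP => /andP[/eqP xE /unique_border_lenP[yt _]].
move: yt; rewrite is_border_lenE yl => /and3P[_ _ /eqP yt].
by move: xy; rewrite yt xE -xl addnK cat_take_drop eqxx.
Qed.

End Borders.

Section TupleSums.
Variable A : finType.
Implicit Types (P Q : pred (seq A)) (F : seq A -> nat).

Lemma card_tuple_pred n P :
  #|[set w : n.-tuple A | P w]| = \sum_(w : n.-tuple A) P w.
Proof. by rewrite -sum1_card big_mkcond; apply: eq_bigr => w _; rewrite inE. Qed.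

Lemma sum_tuple_const m c : \sum_(z : m.-tuple A) c = #|A| ^ m * c.
Proof. by rewrite sum_nat_const card_tuple. Qed.

Lemma sum_tuple_eq m (s : seq A) :
  \sum_(z : m.-tuple A) (tval z == s : nat) = (size s == m).
Proof.
case: (eqVneq (size s) m) => [/eqP sm | sm].
  rewrite (bigD1 (Tuple sm)) //= eqxx big1 // => z zs.
  by case: eqP => // E; move: zs; rewrite (_ : z = Tuple sm) ?eqxx //; apply: val_inj.
by rewrite big1 // => z _; case: eqP => // E; move: sm; rewrite -E size_tuple eqxx.
Qed.

Lemma sum_tuple_cons n F :
  \sum_(w : n.+1.-tuple A) F w = \sum_(x : A) \sum_(w : n.-tuple A) F (x :: w).
Proof.
rewrite pair_big (reindex (fun p : A * n.-tuple A => cons_tuple p.1 p.2)) //=.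
exists (fun w : n.+1.-tuple A => (thead w, behead_tuple w)) => [[x w] _ | w _].
  by congr pair; apply: val_inj.
by apply: val_inj; case: w => [[|x s] Hs].
Qed.

Lemma sum_tuple_cat a b F :
  \sum_(w : (a + b).-tuple A) F w
  = \sum_(v : a.-tuple A) \sum_(y : b.-tuple A) F (v ++ y).
Proof.
elim: a F => [|a IHa] F.
  rewrite [RHS](bigD1 [tuple]) //= [X in _ = _ + X]big1 ?addn0 // => v.
  by rewrite tuple0 => /negP.
rewrite addSn sum_tuple_cons (sum_tuple_cons a (fun s => \sum_(y : b.-tuple A) F (s ++ y))).
by apply: eq_bigr => x _; rewrite (IHa (fun s => F (x :: s))).
Qed.

Lemma sum_tuple_cast m n F :
  m = n -> \sum_(w : m.-tuple A) F w = \sum_(w : n.-tuple A) F w.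
Proof. by move->. Qed.

End TupleSums.

Section BorderCounts.
Variable A : finType.

Lemma sum_short_border n l (Q : pred (seq A)) : 2 * l <= n ->
  \sum_(w : n.-tuple A) ((take l w == drop (n - l) w) && Q (take l w))
  = (\sum_(v : l.-tuple A) Q v) * #|A| ^ (n - 2 * l).
Proof.
move=> ln.
pose F s := ((take l s == drop (n - l) s) && Q (take l s) : nat).
rewrite -(@sum_tuple_cast _ (l + ((n - 2 * l) + l)) n F); last by lia.
rewrite sum_tuple_cat big_distrl /=; apply: eq_bigr => v _.
rewrite (@sum_tuple_cat _ _ _ (fun s => F (v ++ s))).
rewrite (eq_bigr (fun _ => (Q v : nat))) => [|y _].
  by rewrite sum_tuple_const mulnC.
have vl := size_tuple v.
case Qv: (Q v); last by rewrite big1 // => z _; rewrite /F take_size_cat // Qv andbF.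
rewrite (eq_bigr (fun z : l.-tuple A => (tval z == tval v : nat))).
  by rewrite sum_tuple_eq size_tuple eqxx.
move=> z _; rewrite /F take_size_cat // Qv andbT catA drop_size_cat 1?eq_sym //.
by rewrite size_cat !size_tuple; lia.
Qed.

Lemma sum_long_border n l t : t < l < n -> n < 2 * l ->
  \sum_(w : n.-tuple A) (is_border_len w l && unique_border_len (take l w) t)
  = (2 * l == n + t) * \sum_(y : l.-tuple A) unique_border_len y t.
Proof.
move=> /andP[tl ln] nl.
case: eqP => [nt | nt]; last first.
  rewrite mul0n big1 // => w _.
  case: (boolP (is_border_len w l)) => //= wl.
  case: (boolP (unique_border_len _ t)) => // /unique_border_lenP[_ tu].
  have := is_border_len_overlap wl; rewrite size_tuple => /(_ nl) overlap.
  rewrite -(is_border_len_take wl) in overlap; last by lia.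
  by have := tu _ overlap; lia.
rewrite mul1n.
pose F (s : seq A) := (is_border_len s l && unique_border_len (take l s) t : nat).
rewrite -(@sum_tuple_cast _ ((n - l) + l) n F); last by lia.
rewrite sum_tuple_cat exchange_big /=; apply: eq_bigr => y _.
rewrite (eq_bigr (fun x : (n - l).-tuple A =>
  ((tval x == take (l - t) y) && unique_border_len y t : nat))); last first.
  by move=> x _; rewrite /F long_border_catE ?size_tuple //; lia.
case: (boolP (unique_border_len y t)) => yt; last by rewrite big1 // => x _; rewrite andbF.
under eq_bigr do rewrite andbT.
rewrite sum_tuple_eq size_takel ?size_tuple; last by lia.
by apply/eqP; lia.
Qed.

End BorderCounts.

Section UniqueBorderCount.
Variable k : nat.

Lemma B_sum n t : B k n t = \sum_(w : n.-tuple 'I_k) unique_border_len w t.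
Proof. exact: (card_tuple_pred n (fun s => unique_border_len s t)). Qed.

Lemma u_sum t : u k t = \sum_(w : t.-tuple 'I_k) unbordered w.
Proof. exact: (card_tuple_pred t (@unbordered _)). Qed.

Lemma B_eq0 n t : n < 2 * t -> B k n t = 0.
Proof.
move=> nt; rewrite B_sum big1 // => w _.
case: (boolP (unique_border_len _ t)) => // /unique_border_len_size.
by rewrite size_tuple leqNgt nt.
Qed.

Lemma u_exp_decomposition n t : 0 < t -> 2 * t <= n ->
  u k t * k ^ (n - 2 * t) = B k n t
  + \sum_(t.+1 <= l < n) \sum_(w : n.-tuple 'I_k)
      (is_border_len w l && unique_border_len (take l w) t).
Proof.
move=> t_gt0 tn.
rewrite u_sum B_sum -[k in k ^ _]card_ord -sum_short_border //.
rewrite exchange_big /= -big_split /=; apply: eq_bigr => w _.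
have t_lt_n : t < n by lia.
have -> : (take t w == drop (n - t) w) = is_border_len w t.
  by rewrite is_border_lenE size_tuple t_gt0 t_lt_n.
by rewrite border_unbordered_take_split size_tuple.
Qed.

Lemma sum_short_borders n t : 0 < t ->
  \sum_(t.+1 <= l < (n %/ 2).+1) \sum_(w : n.-tuple 'I_k)
      (is_border_len w l && unique_border_len (take l w) t)
  = \sum_(2 * t <= l < (n %/ 2).+1) B k l t * k ^ (n - 2 * l).
Proof.
move=> t_gt0.
rewrite (eq_big_nat _ _ (F2 := fun l => B k l t * k ^ (n - 2 * l))) => [|l /andP[tl ln]].
  by apply: sum_nat_drop_zero_prefix => [|l lt]; [lia | rewrite B_eq0].
rewrite B_sum -[k in k ^ _]card_ord.
rewrite -(@sum_short_border _ n l (fun s => unique_border_len s t)); last by lia.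
have [l_gt0 l_lt_n] : 0 < l /\ l < n by lia.
by apply: eq_bigr => w _; rewrite is_border_lenE size_tuple l_gt0 l_lt_n.
Qed.

Lemma sum_long_borders n t : 0 < t -> 2 * t <= n ->
  \sum_((n %/ 2).+1 <= l < n) \sum_(w : n.-tuple 'I_k)
      (is_border_len w l && unique_border_len (take l w) t)
  = ~~ odd (n + t) * B k ((n + t) %/ 2) t.
Proof.
move=> t_gt0 tn.
rewrite (eq_big_nat _ _ (F2 := fun l => (2 * l == n + t) * B k l t)) => [|l /andP[nl ln]].
  case: (boolP (odd (n + t))) => odd_nt.
    rewrite big1 // => l _.
    by rewrite (_ : (2 * l == n + t) = false) //; apply/negbTE/eqP; lia.
  rewrite (eq_bigr (fun l => if l == (n + t) %/ 2 then B k l t else 0)) => [|l _].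
    by rewrite -big_mkcond big_nat1_eq ifT //; lia.
  have -> : (2 * l == n + t) = (l == (n + t) %/ 2) by apply/eqP/eqP; lia.
  by case: (l == _); rewrite ?mul1n.
by rewrite sum_long_border -?B_sum //; lia.
Qed.

End UniqueBorderCount.

Local Open Scope ring_scope.

Theorem theorem9 (k n t : nat) :
  (2 <= k)%N -> (1 <= t)%N -> (t < n)%N ->
  (B k n t)%:Z =
  if (n < 2 * t)%N then 0
  else if odd (n + t) then
    (u k t)%:Z * (k ^ (n - 2 * t))%:Z
    - \sum_(2 * t <= i < (n %/ 2).+1) (B k i t)%:Z * (k ^ (n - 2 * i))%:Z
  else
    (u k t)%:Z * (k ^ (n - 2 * t))%:Z - (B k ((n + t) %/ 2) t)%:Z
    - \sum_(2 * t <= i < (n %/ 2).+1) (B k i t)%:Z * (k ^ (n - 2 * i))%:Z.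
Proof.
move=> _ t_gt0 _.
case: ifP => [n_lt | /negbT]; first by rewrite B_eq0.
rewrite -leqNgt => tn.
have := u_exp_decomposition k t_gt0 tn.
rewrite (big_cat_nat (n := (n %/ 2).+1)) /=; [|lia|lia].
rewrite sum_short_borders // sum_long_borders // => decomposition.
have -> : \sum_(2 * t <= i < (n %/ 2).+1) (B k i t)%:Z * (k ^ (n - 2 * i))%:Z
        = (\sum_(2 * t <= i < (n %/ 2).+1) B k i t * k ^ (n - 2 * i))%N%:Z.
  by rewrite (big_morph _ PoszD (erefl _)); apply: eq_bigr => i _; rewrite PoszM.
rewrite -PoszM.
by case: ifP => _ /= in decomposition *; lia.
Qed.
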